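(* Let $r,n\ge1$, $a,b$ integers with $\gcd(a,b)=1$, and let $\lambda$ be an $(a,b;n)$-balanced partition of $rn$. Then $$\#\{(i,j)\in\lambda: d_{i,j}\text{ is invariant}\}+\#\{(i,j)\in\lambda: u_{i,j}\text{ is invariant}\}=2r.$$
   Context: Partitions are Young diagrams $\lambda\subset\mathbb{Z}_{\ge0}^2$ (finite sets with $(i,j)\in\lambda\Rightarrow(i',j')\in\lambda$ for $i'\le i$, $j'\le j$). $l(j)=\#\{i:(i,j)\in\lambda\}$, $c(i)=\#\{j:(i,j)\in\lambda\}$. Box $(i,j)$ has color $ai+bj\bmod n$; $\lambda$ is $(a,b;n)$-balanced if each residue mod $n$ is the color of exactly $r$ boxes. An arrow from $(l,s)$ to $(i',j')$ is invariant if $a(l-i')+b(s-j')\equiv0\pmod n$. For $(i,j)\in\lambda$, $d_{i,j}$ is the arrow from $(l(j),j)$ to $(i,c(i)-1)$ and $u_{i,j}$ the arrow from $(i,c(i))$ to $(l(j)-1,j)$. *)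

From mathcomp Require Import all_boot all_order all_algebra.
Set Implicit Arguments. Unset Strict Implicit. Unset Printing Implicit Defensive.
Import Order.TTheory GRing.Theory Num.Theory.
Local Open Scope ring_scope.

(* A partition (Young diagram) is a finite set of boxes (i,j) in Z>=0^2,
   represented as a duplicate-free list, closed under going down-left. *)
Definition is_young (lam : seq (nat * nat)) : Prop :=
  uniq lam /\
  forall i j i' j' : nat, (i, j) \in lam -> (i' <= i)%N -> (j' <= j)%N ->
    (i', j') \in lam.

Definition lcol (lam : seq (nat * nat)) (j : nat) : nat :=
  count (fun p => p.2 == j) lam.
Definition crow (lam : seq (nat * nat)) (i : nat) : nat :=
  count (fun p => p.1 == i) lam.

(* colour of box (i,j): a i + b j mod n, as a residue in [0, n) *)
Definition color (a b : int) (n : nat) (p : nat * nat) : int :=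
  ((a * (p.1)%:Z + b * (p.2)%:Z) %% (n%:Z))%Z.

Definition balanced (a b : int) (n r : nat) (lam : seq (nat * nat)) : Prop :=
  forall k : nat, (k < n)%N -> count (fun p => color a b n p == k%:Z) lam = r.

Definition arrow_invariant (a b : int) (n : nat) (src tgt : int * int) : bool :=
  ((n%:Z) %| (a * (src.1 - tgt.1) + b * (src.2 - tgt.2)))%Z.

Definition d_arrow (lam : seq (nat * nat)) (p : nat * nat) : (int * int) * (int * int) :=
  (((lcol lam p.2)%:Z, (p.2)%:Z), ((p.1)%:Z, (crow lam p.1)%:Z - 1)).
Definition u_arrow (lam : seq (nat * nat)) (p : nat * nat) : (int * int) * (int * int) :=
  (((p.1)%:Z, (crow lam p.1)%:Z), ((lcol lam p.2)%:Z - 1, (p.2)%:Z)).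

(* Let z be a primitive n-th root of unity. Filtering by roots of unity,
   n times the number of invariant arrows is the sum over k < n and over the
   boxes of z^(k w_d) + z^(k w_u), where w is the weight a dx + b dy of an
   arrow. The term k = 0 contributes 2 |lam| = 2 r n. For 0 < k < n put
   t = z^(k a), q = z^(k b) and V(t, q) = sum of t^i q^j over the boxes; an
   arm/leg identity, proved by induction on the rows, rewrites the sum over
   the boxes as V(1/t, 1/q) + t q V(t, q) - (1 - t)(1 - q) V(t, q) V(1/t, 1/q).
   Balancedness gives V(t, q) = r (1 + z^k + ... + z^(k(n-1))) = 0, and the
   same at (1/t, 1/q), so these terms vanish. *)

From mathcomp Require Import all_boot all_order all_algebra.
From mathcomp Require Import ring algC cyclotomic.
Set Implicit Arguments. Unset Strict Implicit. Unset Printing Implicit Defensive.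
Import Order.TTheory GRing.Theory Num.Theory.
Local Open Scope ring_scope.

Fixpoint diagram (s : seq nat) : seq (nat * nat) :=
  if s is c :: s' then [seq (0%N, j) | j <- index_iota 0 c] ++
                       [seq (p.1.+1, p.2) | p <- diagram s']
  else [::].

Definition col_length (s : seq nat) (j : nat) : nat := count (fun c => j < c)%N s.

Lemma mem_diagram s i j :
  ((i, j) \in diagram s) = (i < size s)%N && (j < nth 0%N s i)%N.
Proof.
elim: s i => [|c s IH] [|i] //=; rewrite mem_cat.
  have /negbTE-> : (0%N, j) \notin [seq (p.1.+1, p.2) | p <- diagram s].
    by apply/mapP => -[p _ []].
  by rewrite orbF mem_map ?mem_index_iota // => x y [].
have /negbTE-> : (i.+1, j) \notin [seq (0%N, k) | k <- index_iota 0 c].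
  by apply/mapP => -[k _ []].
rewrite -IH; apply/mapP/idP => [[p hp [-> ->]]|h]; last by exists (i, j).
by rewrite -surjective_pairing.
Qed.

Lemma diagram_uniq s : uniq (diagram s).
Proof.
elim: s => [|c s IH] //=.
rewrite cat_uniq map_inj_uniq ?iota_uniq; last by move=> x y [].
rewrite map_inj_uniq ?IH; last by move=> [x1 x2] [y1 y2] [-> ->].
by rewrite andbT; apply/hasPn => p /mapP [p' _ ->]; apply/mapP => -[x _ []].
Qed.

Lemma count_col_diagram s j :
  count (fun p : nat * nat => p.2 == j) (diagram s) = col_length s j.
Proof.
elim: s => [|c s IH] //=.
rewrite count_cat !count_map IH; congr (_ + _)%N.
by rewrite (@eq_count _ _ (pred1 j)) ?count_uniq_mem ?iota_uniq ?mem_index_iota.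
Qed.

Section YoungDiagram.
Variable lam : seq (nat * nat).
Hypothesis lam_young : is_young lam.

Lemma mem_young_crow i j : ((i, j) \in lam) = (j < crow lam i)%N.
Proof.
have [lam_uniq lam_down] := lam_young.
rewrite /crow -size_filter; apply/idP/idP => [ij_lam | ].
  have := @uniq_leq_size _ [seq (i, k) | k <- iota 0 j.+1] [seq p <- lam | p.1 == i].
  rewrite size_map size_iota; apply; first by rewrite map_inj_uniq ?iota_uniq // => x y [].
  move=> p /mapP [k]; rewrite mem_iota add0n => /andP [_ kj] ->.
  by rewrite mem_filter /= eqxx; apply: lam_down ij_lam _ _.
apply: contraTT => ij_lam; rewrite -leqNgt.
have row_lt p : p \in [seq p <- lam | p.1 == i] -> (p.2 < j)%N.
  move: p => [x y]; rewrite mem_filter /= => /andP [/eqP -> xy_lam].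
  by rewrite ltnNge; apply: contra ij_lam => jy; apply: lam_down xy_lam _ _.
have := @uniq_leq_size _ (map snd [seq p <- lam | p.1 == i]) (iota 0 j).
rewrite size_map size_iota; apply; last first.
  by move=> y /mapP [p p_row ->]; rewrite mem_iota add0n row_lt.
rewrite map_inj_in_uniq ?filter_uniq // => -[x1 x2] [y1 y2].
by rewrite !mem_filter /= => /andP [/eqP -> _] /andP [/eqP -> _] ->.
Qed.

Lemma young_row_lt_size i j : (i, j) \in lam -> (i < size lam)%N.
Proof.
have [lam_uniq lam_down] := lam_young => ij_lam.
have := @uniq_leq_size _ [seq (k, 0%N) | k <- iota 0 i.+1] lam.
rewrite size_map size_iota; apply; first by rewrite map_inj_uniq ?iota_uniq // => x y [].
move=> p /mapP [k]; rewrite mem_iota add0n => /andP [_ ki] ->.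
exact: lam_down ij_lam _ _.
Qed.

Definition row_lengths := mkseq (crow lam) (size lam).

Lemma row_lengths_sorted : sorted geq row_lengths.
Proof.
apply: (homo_sorted (e := leq)); last exact: iota_sorted.
move=> x y xy; rewrite /geq /= leqNgt -mem_young_crow; apply/negP => /(proj2 lam_young).
by move=> /(_ x _ xy (leqnn _)); rewrite mem_young_crow ltnn.
Qed.

Lemma perm_diagram_row_lengths : perm_eq lam (diagram row_lengths).
Proof.
apply: uniq_perm; [exact: (proj1 lam_young) | exact: diagram_uniq |].
move=> [i j]; rewrite mem_diagram size_mkseq.
apply/idP/andP => [ij_lam | [i_lt]]; last by rewrite nth_mkseq // -mem_young_crow.
have i_lt := young_row_lt_size ij_lam.
by rewrite nth_mkseq // -mem_young_crow.
Qed.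

Lemma lcol_row_lengths j : lcol lam j = col_length row_lengths j.
Proof. by rewrite -count_col_diagram; move/permP: perm_diagram_row_lengths; apply. Qed.

Lemma crow_row_lengths p :
  p \in diagram row_lengths -> crow lam p.1 = nth 0%N row_lengths p.1.
Proof.
by case: p => i j; rewrite mem_diagram size_mkseq => /andP [i_lt _]; rewrite nth_mkseq.
Qed.

End YoungDiagram.

Lemma sorted_geq_all_le (c : nat) (s : seq nat) :
  sorted geq (c :: s) -> all (fun x => x <= c)%N s.
Proof. exact: order_path_min (fun y x z h1 h2 => leq_trans h2 h1). Qed.

Section HookGeneratingFunction.
Variable F : fieldType.

Definition diagram_gf (t q : F) s := \sum_(p <- diagram s) t ^+ p.1 * q ^+ p.2.

Lemma diagram_gf_cons t q c s :
  diagram_gf t q (c :: s) = \sum_(0 <= j < c) q ^+ j + t * diagram_gf t q s.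
Proof.
rewrite /diagram_gf /= big_cat /= !big_map mulr_sumr; congr (_ + _).
  by apply: eq_bigr => j _; rewrite mul1r.
by apply: eq_bigr => p _; rewrite exprS mulrA.
Qed.

Lemma diagram_gf_by_columns t q s c : sorted geq s -> all (fun x => x <= c)%N s ->
  (1 - t) * diagram_gf t q s = \sum_(0 <= j < c) q ^+ j * (1 - t ^+ col_length s j).
Proof.
elim: s c => [|d s IH] c /=.
  by move=> _ _; rewrite /diagram_gf big_nil mulr0 big1 // => j _; rewrite subrr mulr0.
move=> s_sorted /andP [d_le_c s_le_c].
rewrite diagram_gf_cons mulrDr mulrCA (IH d) ?(path_sorted s_sorted) ?sorted_geq_all_le //.
rewrite (big_cat_nat (leq0n d) d_le_c) /= [X in _ = _ + X]big1_seq; last first.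
  move=> j /andP [_]; rewrite mem_index_iota => /andP [d_le_j _].
  have /eqP-> : col_length s j == 0%N.
    rewrite -leqn0 leqNgt -has_count; apply/hasPn => x x_s; rewrite -leqNgt.
    by apply: leq_trans d_le_j; move/allP: (sorted_geq_all_le s_sorted) => /(_ x x_s).
  by rewrite ltnNge d_le_j subrr mulr0.
rewrite addr0 !mulr_sumr -big_split /=.
apply: eq_big_seq => j; rewrite mem_index_iota => /andP [_ j_lt_d].
rewrite /col_length /= j_lt_d add1n exprS; ring.
Qed.

Lemma expr_geom (q : F) c : q ^+ c = 1 - (1 - q) * \sum_(0 <= j < c) q ^+ j.
Proof. by rewrite big_mkord; apply: (addIr (-1)); rewrite subrX1; ring. Qed.

(* w^(weight of d_{i,j}) + w^(weight of u_{i,j}) at p = (i, j), in terms of t = w^a, q = w^b. *)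
Definition hook_term (t q : F) s (p : nat * nat) :=
  t ^+ col_length s p.2 * q ^+ p.2.+1 / (t ^+ p.1 * q ^+ nth 0%N s p.1)
  + t ^+ p.1.+1 * q ^+ nth 0%N s p.1 / (t ^+ col_length s p.2 * q ^+ p.2).

Variables t q : F.
Hypotheses (t_neq0 : t != 0) (q_neq0 : q != 0).

Lemma hook_term_cons_lower c s i j : all (fun x => x <= c)%N s -> (i, j) \in diagram s ->
  hook_term t q (c :: s) (i.+1, j) = hook_term t q s (i, j).
Proof.
move=> s_le_c; rewrite mem_diagram => /andP [i_lt j_lt].
have j_lt_c : (j < c)%N.
  by apply: leq_trans j_lt _; move/allP: s_le_c; apply; rewrite mem_nth.
rewrite /hook_term /col_length /= j_lt_c add1n !exprS; field.
by rewrite ?mulf_neq0 ?expf_neq0 ?t_neq0 ?q_neq0.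
Qed.

Lemma hook_term_cons_first_row c s : sorted geq (c :: s) ->
  \sum_(0 <= j < c) hook_term t q (c :: s) (0%N, j) =
    t * q / q ^+ c * (\sum_(0 <= j < c) q ^+ j - (1 - t) * diagram_gf t q s)
  + q ^+ c * (\sum_(0 <= j < c) q^-1 ^+ j - (1 - t^-1) * diagram_gf t^-1 q^-1 s).
Proof.
move=> cs_sorted; have s_sorted := path_sorted cs_sorted.
have s_le_c := sorted_geq_all_le cs_sorted.
rewrite !(@diagram_gf_by_columns _ _ _ c) // -!sumrB !mulr_sumr -big_split /=.
apply: eq_big_nat => j /andP [_ j_lt_c].
rewrite /hook_term /col_length /= j_lt_c add1n !exprS !expr0 !exprVn; field.
by rewrite ?mulf_neq0 ?expf_neq0 ?t_neq0 ?q_neq0.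
Qed.

Lemma hook_sum_identity s : sorted geq s ->
  \sum_(p <- diagram s) hook_term t q s p =
    diagram_gf t^-1 q^-1 s + t * q * diagram_gf t q s
    - (1 - t) * (1 - q) * diagram_gf t q s * diagram_gf t^-1 q^-1 s.
Proof.
elim: s => [|c s IH] cs_sorted; first by rewrite /diagram_gf !big_nil; ring.
have s_sorted := path_sorted cs_sorted.
rewrite /= big_cat /= !big_map hook_term_cons_first_row //.
rewrite (eq_big_seq (hook_term t q s)); last first.
  by move=> [i j]; apply: hook_term_cons_lower; apply: sorted_geq_all_le.
rewrite IH // !diagram_gf_cons.
rewrite -[(q ^+ c)^-1]exprVn !expr_geom; field.
by rewrite t_neq0 q_neq0.
Qed.

End HookGeneratingFunction.

Lemma unity_root_neq0 (R : nzRingType) n (w : R) : (0 < n)%N -> w ^+ n = 1 -> w != 0.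
Proof.
by move=> n_gt0 wn1; apply: contra_eq_neq wn1 => ->; rewrite expr0n gtn_eqF // eq_sym oner_neq0.
Qed.

Lemma sum_expr_unity_root_eq0 (R : idomainType) n (w : R) :
  w ^+ n = 1 -> w != 1 -> \sum_(k < n) w ^+ k = 0.
Proof.
move=> wn1 w_neq1; have := subrX1 w n; rewrite wn1 subrr => /esym/eqP.
by rewrite mulf_eq0 subr_eq0 (negbTE w_neq1) => /eqP.
Qed.

Lemma exprz_modz (F : fieldType) n (w : F) m : w ^+ n = 1 -> w ^ (m %% n%:Z)%Z = w ^ m.
Proof.
have [-> _ | n_gt0 wn1] := posnP n; first by rewrite modz0.
have w_unit : w \is a GRing.unit by rewrite unitfE (unity_root_neq0 n_gt0 wn1).
rewrite [in RHS](divz_eq m n) [RHS]exprzDr // -exprz_exp exprzAC.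
by rewrite [w ^ n%:Z]wn1 exp1rz mul1r.
Qed.

Lemma exprz_lin (F : fieldType) (w : F) (a b : int) (i j : nat) :
  w != 0 -> w ^ (a * i%:Z + b * j%:Z) = (w ^ a) ^+ i * (w ^ b) ^+ j.
Proof. by move=> w_neq0; rewrite exprzDr ?unitfE // -!exprz_exp. Qed.

Lemma exprz_lin_sub (F : fieldType) (w : F) (a b : int) (x1 y1 x2 y2 : nat) : w != 0 ->
  w ^ (a * (x1%:Z - x2%:Z) + b * (y1%:Z - y2%:Z))
  = (w ^ a) ^+ x1 * (w ^ b) ^+ y1 / ((w ^ a) ^+ x2 * (w ^ b) ^+ y2).
Proof.
move=> w_neq0; rewrite -!exprz_lin // invr_expz -exprzDr ?unitfE //; congr (_ ^ _); ring.
Qed.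

Section PrimitiveRoot.
Variables (F : fieldType) (n : nat) (z : F).
Hypothesis z_prim : n.-primitive_root z.

Lemma prim_root_exprz_eq1 m : (z ^ m == 1) = (n%:Z %| m)%Z.
Proof. by case: m => k; rewrite /dvdz unfold_in /= ?invr_eq1 (prim_order_dvd z_prim). Qed.

Lemma sum_prim_root_exprz m : \sum_(k < n) (z ^+ k) ^ m = (n%:Z %| m)%Z%:R * n%:R.
Proof.
under eq_bigr do rewrite -[z ^+ _]/(z ^ _%:Z) exprzAC.
rewrite -prim_root_exprz_eq1; have [-> | zm_neq1] := eqVneq (z ^ m) 1.
  by rewrite mul1r; under eq_bigr do rewrite exp1rz; rewrite sumr_const card_ord.
rewrite mul0r sum_expr_unity_root_eq0 //.
by rewrite -[_ ^+ n]/(_ ^ n%:Z) exprzAC [z ^ n%:Z](prim_expr_order z_prim) exp1rz.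
Qed.

Lemma count_dvd_prim_root (T : Type) (m : T -> int) (L : seq T) :
  (count (fun x => n%:Z %| m x)%Z L)%:R * n%:R = \sum_(k < n) \sum_(x <- L) (z ^+ k) ^ m x.
Proof.
rewrite exchange_big /=; under eq_bigr do rewrite sum_prim_root_exprz.
by rewrite -mulr_suml -sum1_count big_mkcond natr_sum.
Qed.

End PrimitiveRoot.

Lemma color_ge0_lt (a b : int) n p : (0 < n)%N -> 0 <= color a b n p < n%:Z.
Proof.
move=> n_gt0; have n_neq0 : n%:Z != 0 by rewrite eqz_nat -lt0n.
by rewrite /color modz_ge0 // ltz_pmod // ltz_nat.
Qed.

Lemma balanced_sum (V : nmodType) (a b : int) n r lam (f : int -> V) :
  (0 < n)%N -> balanced a b n r lam ->
  \sum_(p <- lam) f (color a b n p) = (\sum_(k < n) f k%:Z) *+ r.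
Proof.
move=> n_gt0 lam_bal.
transitivity (\sum_(p <- lam) \sum_(k < n) f k%:Z *+ (color a b n p == k%:Z)).
  apply: eq_bigr => p _; have /andP [c_ge0 c_lt] := color_ge0_lt a b p n_gt0.
  rewrite -(gez0_abs c_ge0) ltz_nat in c_lt *.
  rewrite (bigD1 (Ordinal c_lt)) //= eqxx mulr1n big1 ?addr0 // => k k_neq.
  by rewrite eqz_nat (_ : (_ == _) = false) // eq_sym; apply/negbTE: k_neq.
rewrite exchange_big -sumrMnl /=; apply: eq_bigr => k _.
rewrite sumrMnr -(lam_bal k (ltn_ord k)) -sum1_count.
by rewrite (big_mkcond (fun p => color a b n p == k)).
Qed.

Lemma balanced_diagram_gf_eq0 (F : fieldType) (a b : int) n r lam (w : F) :
  is_young lam -> (0 < n)%N -> balanced a b n r lam -> w ^+ n = 1 -> w != 1 ->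
  diagram_gf (w ^ a) (w ^ b) (row_lengths lam) = 0.
Proof.
move=> lam_young n_gt0 lam_bal wn1 w_neq1.
rewrite /diagram_gf -(perm_big _ (perm_diagram_row_lengths lam_young)) /=.
transitivity (\sum_(p <- lam) w ^ color a b n p).
  apply: eq_bigr => p _.
  by rewrite /color (exprz_modz _ wn1) exprz_lin ?(unity_root_neq0 n_gt0 wn1).
by rewrite (balanced_sum _ n_gt0 lam_bal) sum_expr_unity_root_eq0 // mul0rn.
Qed.

Definition arrow_weight (a b : int) (src tgt : int * int) : int :=
  a * (src.1 - tgt.1) + b * (src.2 - tgt.2).

Lemma hook_sum_unity_root_eq0 (F : fieldType) (a b : int) n r lam (w : F) :
  is_young lam -> (0 < n)%N -> balanced a b n r lam -> w ^+ n = 1 -> w != 1 ->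
  \sum_(p <- lam) (w ^ arrow_weight a b (d_arrow lam p).1 (d_arrow lam p).2
                  + w ^ arrow_weight a b (u_arrow lam p).1 (u_arrow lam p).2) = 0.
Proof.
move=> lam_young n_gt0 lam_bal wn1 w_neq1.
have w_neq0 := unity_root_neq0 n_gt0 wn1.
set s := row_lengths lam.
transitivity (\sum_(p <- diagram s) hook_term (w ^ a) (w ^ b) s p).
  rewrite (perm_big _ (perm_diagram_row_lengths lam_young)) /=.
  apply: eq_big_seq => -[i j] ij_diag.
  rewrite /arrow_weight /= (lcol_row_lengths lam_young) (crow_row_lengths ij_diag).
  set l := col_length s j; set c := nth 0%N s i.
  have -> : j%:Z - (c%:Z - 1) = (j.+1)%:Z - c%:Z by rewrite intS; ring.
  have -> : i%:Z - (l%:Z - 1) = (i.+1)%:Z - l%:Z by rewrite intS; ring.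
  by rewrite !exprz_lin_sub.
have winv_n1 : w^-1 ^+ n = 1 by rewrite exprVn wn1 invr1.
have winv_neq1 : w^-1 != 1 by rewrite invr_eq1.
rewrite hook_sum_identity ?row_lengths_sorted ?expfz_neq0 // !expfV.
rewrite (balanced_diagram_gf_eq0 lam_young n_gt0 lam_bal wn1 w_neq1).
rewrite (balanced_diagram_gf_eq0 lam_young n_gt0 lam_bal winv_n1 winv_neq1); ring.
Qed.

Theorem corollary2p1 (r n : nat) (a b : int) (lam : seq (nat * nat)) :
  (1 <= r)%N -> (1 <= n)%N -> gcdz a b = 1%N ->
  is_young lam -> size lam = (r * n)%N -> balanced a b n r lam ->
  (count (fun p => arrow_invariant a b n (d_arrow lam p).1 (d_arrow lam p).2) lam
   + count (fun p => arrow_invariant a b n (u_arrow lam p).1 (u_arrow lam p).2) lam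
   = 2 * r)%N.
Proof.
move=> _ n_gt0 _ lam_young size_lam lam_bal.
have [z z_prim] := C_prim_root_exists n_gt0.
have n_neq0 : (n%:R : algC) != 0 by rewrite pnatr_eq0 -lt0n.
apply/eqP; rewrite -(eqr_nat algC) -(inj_eq (mulIf n_neq0)); apply/eqP.
rewrite natrD mulrDl.
rewrite (count_dvd_prim_root z_prim
           (fun p => arrow_weight a b (d_arrow lam p).1 (d_arrow lam p).2)).
rewrite (count_dvd_prim_root z_prim
           (fun p => arrow_weight a b (u_arrow lam p).1 (u_arrow lam p).2)).
rewrite -big_split (bigD1 (Ordinal n_gt0)) //= [X in _ + X]big1 ?addr0 => [|k k_neq0].
  rewrite -big_split /=; under eq_bigr do rewrite expr0 !exp1rz.
  by rewrite big_const_seq count_predT iter_addr addr0 size_lam -mulr_natr !natrM; ring.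
rewrite -big_split; apply: (hook_sum_unity_root_eq0 (n := n) (r := r)) => //.
  by rewrite exprAC (prim_expr_order z_prim) expr1n.
rewrite -(prim_order_dvd z_prim); apply: contra k_neq0 => /dvdn_leq k_ge_n.
by rewrite -val_eqE /= eqn0Ngt; apply: contraL (ltn_ord k) => /k_ge_n; rewrite -leqNgt.
Qed.
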